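(* Let $n\geq 2$ and fix $I\sqcup J=[2,n]$. There is at most one $\sigma\in S_n$ such that $A^\sigma_{[2,n],\emptyset}=A^{\mathrm{id}}_{I,J}$.
   Context: Let $w_{ij}$, $1\leq i,j\leq n$, be formal variables subject only to $w_{ij}+w_{ji}=0$. Let $[2,n]=\{2,\dots,n\}$. For $\sigma\in S_n$ and a disjoint decomposition $I\sqcup J=[2,n]$, set $$A^\sigma_{I,J}:=\sum_{i\in I}\sum_{\ell=1}^{i-1}w_{\sigma(\ell)\sigma(i)}-\sum_{j\in J}\sum_{\ell=1}^{j-1}w_{\sigma(\ell)\sigma(j)}.$$ *)

From mathcomp Require Import all_boot all_order all_algebra all_fingroup.
Set Implicit Arguments. Unset Strict Implicit. Unset Printing Implicit Defensive.
Import GRing.Theory.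
Local Open Scope ring_scope.

(* Indices 1..n of the paper are represented 0-based by 'I_n.
   An element of the abelian group generated by the w_ab subject to
   w_ab + w_ba = 0 is represented by its antisymmetric coefficient function
   c : 'I_n -> 'I_n -> int; the generator w_ab (a <> b) is the function
   (x,y) |-> [x=a,y=b] - [x=b,y=a].  (Only w_ab with a <> b occur below.) *)
Definition wgen (n : nat) (a b : 'I_n) : 'I_n -> 'I_n -> int :=
  fun x y => ((x == a) && (y == b))%:R - ((x == b) && (y == a))%:R.

(* A^sigma_{I,J}, as a coefficient function.  Position i (1-based) is the
   ordinal i-1; sum over l = 1..i-1 becomes l < i (0-based). *)
Definition Acoef (n : nat) (s : 'S_n) (I J : {set 'I_n}) : 'I_n -> 'I_n -> int :=
  fun x y =>
    \sum_(i in I) \sum_(l < n | (l < i)%N) wgen (s l) (s i) x y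
  - \sum_(j in J) \sum_(l < n | (l < j)%N) wgen (s l) (s j) x y.

Definition pos2n (n : nat) : {set 'I_n} := [set i : 'I_n | (0 < i)%N].

From mathcomp Require Import all_boot all_order all_algebra all_fingroup.
Import GRing.Theory.
Local Open Scope ring_scope.

(* The coefficient of w_xy in A^s_{[2,n],0} is +1 or -1 according to whether
   x occurs before or after y in the word s(1) ... s(n).  Hence A^s_{[2,n],0}
   records the relative order of the positions s^-1 x, and a permutation u of
   [1,n] is determined by that relation, since u x is the number of y with
   u y < u x.  Thus s is determined by A^s_{[2,n],0} alone, whatever the
   right-hand side A^id_{I,J} is. *)

Lemma card_ord_ltn n k : (k <= n)%N -> #|[set i : 'I_n | (i < k)%N]| = k.
Proof.
move=> le_kn; have -> : [set i : 'I_n | (i < k)%N] = widen_ord le_kn @: setT.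
  apply/setP=> i; rewrite inE; apply/idP/imsetP => [lt_ik | [j _ ->]].
    by exists (Ordinal lt_ik) => //; apply: val_inj.
  exact: (ltn_ord j).
by rewrite card_imset ?cardsT ?card_ord // => i j /(congr1 val) eq_ij; exact: val_inj.
Qed.

Lemma card_perm_ltn n (u : 'S_n) x : #|[set y | (u y < u x)%N]| = u x.
Proof.
rewrite -[RHS](@card_ord_ltn _ _ (ltnW (ltn_ord (u x)))).
rewrite -(card_preimset [set i : 'I_n | (i < u x)%N] (@perm_inj _ u)).
by apply: eq_card => y; rewrite !inE.
Qed.

Lemma perm_ltn_inj n (s t : 'S_n) :
  (forall x y, (s x < s y)%N = (t x < t y)%N) -> s = t.
Proof.
move=> eq_ltn; apply/permP => x; apply: val_inj.
rewrite /= -card_perm_ltn -[RHS]card_perm_ltn.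
by apply: eq_card => y; rewrite !inE eq_ltn.
Qed.

Lemma eq_perm_invg (T : finType) (s : {perm T}) x y : (s x == y) = (x == s^-1%g y).
Proof. by apply/eqP/eqP => [<- | ->]; rewrite ?permK ?permKV. Qed.

Lemma sum_ltn_pairs_indicator (R : pzSemiRingType) n (a b : 'I_n) :
  \sum_(i : 'I_n) \sum_(l < n | (l < i)%N) ((l == a) && (i == b))%:R
    = (a < b)%N%:R :> R.
Proof.
rewrite (bigD1 b) //= [X in _ + X]big1 ?addr0; last first.
  by move=> i /negbTE neq_ib; rewrite big1 // => l _; rewrite neq_ib andbF.
under eq_bigr do rewrite eqxx andbT.
case: ltnP => [lt_ab | le_ba].
  by rewrite (bigD1 a) //= eqxx big1 ?addr0 // => l /andP[_ /negbTE ->].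
by rewrite big1 // => l lt_lb; case: eqP => // eq_la; move: lt_lb; rewrite eq_la ltnNge le_ba.
Qed.

Definition ltn_sign (a b : nat) : int := (a < b)%N%:R - (b < a)%N%:R.

Lemma ltn_sign_gt0 a b : (0 < ltn_sign a b) = (a < b)%N.
Proof. by rewrite /ltn_sign; case: ltngtP. Qed.

Lemma Acoef_pos2n_set0 n (s : 'S_n) x y :
  Acoef s (pos2n n) set0 x y = ltn_sign (s^-1%g x) (s^-1%g y).
Proof.
rewrite /Acoef big_set0 subr0.
have -> : \sum_(i in pos2n n) \sum_(l < n | (l < i)%N) wgen (s l) (s i) x y
        = \sum_(i : 'I_n) \sum_(l < n | (l < i)%N) wgen (s l) (s i) x y.
  rewrite big_mkcond; apply: eq_bigr => i _; rewrite inE lt0n.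
  by case: eqP => // i0; rewrite big_pred0 // => l; rewrite i0.
rewrite /wgen; under eq_bigr do rewrite sumrB; rewrite sumrB.
under eq_bigr do under eq_bigr do rewrite (eq_sym x) (eq_sym y) !eq_perm_invg.
rewrite sum_ltn_pairs_indicator.
under eq_bigr do under eq_bigr do rewrite (eq_sym x) (eq_sym y) !eq_perm_invg andbC.
by rewrite sum_ltn_pairs_indicator.
Qed.

Lemma Acoef_pos2n_set0_inj n (s t : 'S_n) :
  (forall x y, Acoef s (pos2n n) set0 x y = Acoef t (pos2n n) set0 x y) ->
  s = t.
Proof.
move=> eqA; apply: invg_inj; apply: perm_ltn_inj => x y.
by rewrite -!ltn_sign_gt0 -!Acoef_pos2n_set0 eqA.
Qed.

Theorem lemma3p7 (n : nat) (hn : (2 <= n)%N) (I J : {set 'I_n})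
    (hdisj : [disjoint I & J]) (hcov : I :|: J = pos2n n) :
  forall s t : 'S_n,
    (forall x y, Acoef s (pos2n n) set0 x y = Acoef 1 I J x y) ->
    (forall x y, Acoef t (pos2n n) set0 x y = Acoef 1 I J x y) ->
    s = t.
Proof.
move=> s t hs ht; apply: Acoef_pos2n_set0_inj => x y.
by rewrite hs ht.
Qed.
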